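(* With the notation and hypotheses on $A_\kappa,B_\kappa,W_P,W_Q,D_P,D_Q,\lambda_2$ and the function $F$ as in the context, let $V'\in\mathbb{R}^{n\times k}$ have strictly positive entries, and for $V\in\mathbb{R}^{n\times k}$ with strictly positive entries define $$\begin{aligned}J(V,V')=\sum_{\kappa=1}^{2}\Big[&-2\sum_{i,s}(B_\kappa^+)_{is}v'_{is}\Big(1+\log\frac{v_{is}}{v'_{is}}\Big)+\sum_{i,s}(B_\kappa^-)_{is}\frac{v_{is}^2+v_{is}'^2}{v'_{is}}+\sum_{i,s}\frac{(V'A_\kappa^+)_{is}v_{is}^2}{v'_{is}}\\&-\sum_{i,s,l}(A_\kappa^-)_{sl}v'_{is}v'_{il}\Big(1+\log\frac{v_{is}v_{il}}{v'_{is}v'_{il}}\Big)\Big]\\ +\lambda_2\sum_{G\in\{P,Q\}}\Big[&\sum_{i,s}\frac{(D_GV')_{is}v_{is}^2}{v'_{is}}-\sum_{j,l,s}(W_G)_{jl}v'_{js}v'_{ls}\Big(1+\log\frac{v_{js}v_{ls}}{v'_{js}v'_{ls}}\Big)\Big].\end{aligned}$$ Then (i) $J(V,V')\ge F(V)$ and $J(V,V)=F(V)$ for all such $V,V'$, i.e. $J$ is an auxiliary function for $F$; (ii) $J(\cdot,V')$ is convex on the open positive orthant; and (iii) if the matrices $\Delta_1=B_1^++B_2^++V'(A_1^-+A_2^-)+\lambda_2(W_P+W_Q)V'$ and $\Delta_2=B_1^-+B_2^-+V'(A_1^++A_2^+)+\lambda_2(D_P+D_Q)V'$ have strictly positive entries,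 then the global minimizer of $J(\cdot,V')$ over the positive orthant is given by $v_{ij}=v'_{ij}\sqrt{(\Delta_1)_{ij}/(\Delta_2)_{ij}}$.
   Context: Setting: $n,k\ge1$, $\lambda_2\ge0$; $A_1,A_2\in\mathbb{R}^{k\times k}$ symmetric; $B_1,B_2\in\mathbb{R}^{n\times k}$; $W_P,W_Q\in\mathbb{R}^{n\times n}$ symmetric with nonnegative entries; $D_P,D_Q$ diagonal with $(D_G)_{ii}=\sum_j(W_G)_{ij}$. For a real matrix $M$, $M^+_{ij}=(|M_{ij}|+M_{ij})/2$ and $M^-_{ij}=(|M_{ij}|-M_{ij})/2$. For $V=[v_{ij}]\in\mathbb{R}^{n\times k}$, $F(V)=\mathrm{Tr}\big(-2V^TB_1^+ + 2V^TB_1^- + VA_1^+V^T - VA_1^-V^T - 2V^TB_2^+ + 2V^TB_2^- + VA_2^+V^T - VA_2^-V^T + \lambda_2 V^TD_PV - \lambda_2 V^TW_PV + \lambda_2 V^TD_QV - \lambda_2 V^TW_QV\big)$. *)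

From HB Require Import structures.
From mathcomp Require Import all_boot all_order all_algebra.
From mathcomp Require Import reals exp.
Set Implicit Arguments. Unset Strict Implicit. Unset Printing Implicit Defensive.
Import Order.TTheory GRing.Theory Num.Theory.
Local Open Scope ring_scope.

Section Defs.
Variable R : realType.

Definition pospart m n (M : 'M[R]_(m, n)) : 'M[R]_(m, n) :=
  \matrix_(i, j) ((`|M i j| + M i j) / 2).
Definition negpart m n (M : 'M[R]_(m, n)) : 'M[R]_(m, n) :=
  \matrix_(i, j) ((`|M i j| - M i j) / 2).

Definition degmx n (W : 'M[R]_n) : 'M[R]_n :=
  \matrix_(i, j) ((i == j)%:R * \sum_(l < n) W i l).

Definition symmx n (M : 'M[R]_n) : Prop := M^T = M.
Definition nonnegmx m n (M : 'M[R]_(m, n)) : Prop := forall i j, 0 <= M i j.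
Definition posmx m n (M : 'M[R]_(m, n)) : Prop := forall i j, 0 < M i j.

Definition Fobj n k (lam2 : R) (A1 A2 : 'M[R]_k) (B1 B2 : 'M[R]_(n, k))
  (WP WQ : 'M[R]_n) (V : 'M[R]_(n, k)) : R :=
  (* Tr of a sum with n x n and k x k summands, split by linearity *)
  - 2 * \tr (V^T *m pospart B1) + 2 * \tr (V^T *m negpart B1)
  + \tr (V *m pospart A1 *m V^T) - \tr (V *m negpart A1 *m V^T)
  - 2 * \tr (V^T *m pospart B2) + 2 * \tr (V^T *m negpart B2)
  + \tr (V *m pospart A2 *m V^T) - \tr (V *m negpart A2 *m V^T)
  + lam2 * \tr (V^T *m degmx WP *m V) - lam2 * \tr (V^T *m WP *m V)
  + lam2 * \tr (V^T *m degmx WQ *m V) - lam2 * \tr (V^T *m WQ *m V).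

Definition Jterm n k (A : 'M[R]_k) (B : 'M[R]_(n, k)) (V V' : 'M[R]_(n, k)) : R :=
  - 2 * (\sum_(i < n) \sum_(s < k)
          pospart B i s * V' i s * (1 + ln (V i s / V' i s)))
  + \sum_(i < n) \sum_(s < k) negpart B i s * ((V i s ^+ 2 + V' i s ^+ 2) / V' i s)
  + \sum_(i < n) \sum_(s < k) (V' *m pospart A) i s * V i s ^+ 2 / V' i s
  - \sum_(i < n) \sum_(s < k) \sum_(l < k)
      negpart A s l * V' i s * V' i l
        * (1 + ln ((V i s * V i l) / (V' i s * V' i l))).

Definition Jgraph n k (W : 'M[R]_n) (V V' : 'M[R]_(n, k)) : R :=
  \sum_(i < n) \sum_(s < k) (degmx W *m V') i s * V i s ^+ 2 / V' i s
  - \sum_(j < n) \sum_(l < n) \sum_(s < k)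
      W j l * V' j s * V' l s
        * (1 + ln ((V j s * V l s) / (V' j s * V' l s))).

Definition Jaux n k (lam2 : R) (A1 A2 : 'M[R]_k) (B1 B2 : 'M[R]_(n, k))
  (WP WQ : 'M[R]_n) (V V' : 'M[R]_(n, k)) : R :=
  Jterm A1 B1 V V' + Jterm A2 B2 V V'
  + lam2 * (Jgraph WP V V' + Jgraph WQ V V').

End Defs.

From HB Require Import structures.
From mathcomp Require Import all_boot all_order all_algebra.
From mathcomp Require Import reals exp.
From mathcomp Require Import ring lra.
Set Implicit Arguments. Unset Strict Implicit. Unset Printing Implicit Defensive.
Import Order.TTheory GRing.Theory Num.Theory.
Local Open Scope ring_scope.

(* Every trace in F is a Frobenius pairing <V, M>, so F splits into two brackets
   Fterm (one per kappa) and two brackets Fgraph (one per graph G), matching the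
   brackets Jterm and Jgraph of J.  The argument rests on three elementary bounds:
   y (1 + ln (x / y)) <= x (tangent line of ln), 2 v <= (v^2 + c^2) / c, and
   weighted AM-GM, which majorizes a nonnegative symmetric quadratic form by a
   diagonal one (qform_le_diag); the logarithmic pair sums are packaged as pairlog.
   (i)  J(V, V') >= F(V) bracket by bracket, with equality at V' = V.
   (ii),(iii)  For fixed V', J(V, V') - J(U, V') = Jsep(V) - Jsep(U), where Jsep is a
   sum over the entries of  b_is v_is^2 - a_is ln v_is  with a = 2 V' Delta1 and
   b = Delta2 / V' (Jaux_sep).  Each summand is convex, and when a = 2 b c^2 it is
   minimized exactly at c with excess >= b (v - c)^2; for the update
   c = V' sqrt (Delta1 / Delta2) this identity holds, which gives convexity,
   minimality and uniqueness of the closed-form minimizer. *)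

Section ScalarFacts.
Variable R : realType.
Implicit Types a b c t x y : R.

Lemma ln_le_subr1 x : 0 < x -> ln x <= x - 1.
Proof.
move=> x0; have := @le_ln1Dx R (x - 1).
by rewrite addrCA subrr addr0; apply; lra.
Qed.

Lemma ln_tangent x y : 0 < x -> 0 < y -> ln x - ln y <= x / y - 1.
Proof. by move=> x0 y0; rewrite -ln_div ?posrE // ln_le_subr1 ?divr_gt0. Qed.

(* The bound behind every logarithmic term of J: y (1 + ln (x / y)) <= x. *)
Lemma mul_1Dln_le x y : 0 < x -> 0 < y -> y * (1 + ln (x / y)) <= x.
Proof.
move=> x0 y0; apply: (le_trans (y := y * (1 + (x / y - 1)))).
  by rewrite ler_wpM2l ?lerD2l ?(ltW y0) // ln_le_subr1 ?divr_gt0.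
by rewrite addrCA subrr addr0 mulrCA divff ?mulr1 // lt0r_neq0.
Qed.

Lemma convex_comb_gt0 t x y : 0 < x -> 0 < y -> 0 <= t <= 1 ->
  0 < t * x + (1 - t) * y.
Proof. by move=> x0 y0 /andP[t0 t1]; nra. Qed.

(* Concavity of ln: add the tangent-line bounds at the mean m for x and y. *)
Lemma ln_concave t x y : 0 < x -> 0 < y -> 0 <= t <= 1 ->
  t * ln x + (1 - t) * ln y <= ln (t * x + (1 - t) * y).
Proof.
move=> x0 y0 t01; have m0 := convex_comb_gt0 x0 y0 t01.
set m := t * x + (1 - t) * y in m0 *.
have [t0 t1] : 0 <= t /\ 0 <= 1 - t by case/andP: t01; lra.
have hx := ler_wpM2l t0 (ln_tangent x0 m0).
have hy := ler_wpM2l t1 (ln_tangent y0 m0).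
have mean : t * (x / m - 1) + (1 - t) * (y / m - 1) = 0.
  by rewrite /m; field; exact: lt0r_neq0.
lra.
Qed.

Lemma sqr_convex t x y : 0 <= t <= 1 ->
  (t * x + (1 - t) * y) ^+ 2 <= t * x ^+ 2 + (1 - t) * y ^+ 2.
Proof.
move=> /andP[t0 t1]; rewrite -subr_ge0.
have -> : t * x ^+ 2 + (1 - t) * y ^+ 2 - (t * x + (1 - t) * y) ^+ 2
        = t * (1 - t) * (x - y) ^+ 2 by ring.
by rewrite mulr_ge0 ?sqr_ge0 ?mulr_ge0 ?subr_ge0.
Qed.

(* Weighted AM-GM: the bound that majorizes the quadratic A^+ term of F. *)
Lemma weighted_amgm c d u v : 0 < c -> 0 < d ->
  2 * (u * v) <= c * v ^+ 2 / d + d * u ^+ 2 / c.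
Proof.
move=> c0 d0; rewrite -subr_ge0.
have -> : c * v ^+ 2 / d + d * u ^+ 2 / c - 2 * (u * v) = (c * v - d * u) ^+ 2 / (c * d).
  by field; rewrite !lt0r_neq0.
by rewrite divr_ge0 ?sqr_ge0 // ltW // mulr_gt0.
Qed.

(* 2 v <= (v^2 + c^2) / c, the bound for the B^- terms of J. *)
Lemma twice_le_sqr_div v c : 0 < c -> 2 * v <= (v ^+ 2 + c ^+ 2) / c.
Proof.
move=> c0; rewrite -subr_ge0.
have -> : (v ^+ 2 + c ^+ 2) / c - 2 * v = (v - c) ^+ 2 / c by field; exact: lt0r_neq0.
by rewrite divr_ge0 ?sqr_ge0 ?ltW.
Qed.

(* The one-variable function b x^2 - a ln x, into which J(., V') separates. *)
Definition logquad a b x : R := b * x ^+ 2 - a * ln x.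

Lemma logquad_convex a b t x y : 0 <= a -> 0 <= b -> 0 < x -> 0 < y -> 0 <= t <= 1 ->
  logquad a b (t * x + (1 - t) * y) <= t * logquad a b x + (1 - t) * logquad a b y.
Proof.
move=> a0 b0 x0 y0 t01; rewrite /logquad.
have hsq := ler_wpM2l b0 (sqr_convex x y t01).
have hln := ler_wpM2l a0 (ln_concave x0 y0 t01).
lra.
Qed.

Lemma logquad_min b c x : 0 <= b -> 0 < c -> 0 < x ->
  b * (x - c) ^+ 2 <= logquad (2 * b * c ^+ 2) b x - logquad (2 * b * c ^+ 2) b c.
Proof.
move=> b0 c0 x0; rewrite /logquad.
have a0 : 0 <= 2 * b * c ^+ 2 by apply: mulr_ge0; [lra | exact: sqr_ge0].
have h := ler_wpM2l a0 (ln_tangent x0 c0).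
have e : b * (x ^+ 2 - c ^+ 2) - 2 * b * c ^+ 2 * (x / c - 1) = b * (x - c) ^+ 2.
  by field; exact: lt0r_neq0.
lra.
Qed.
End ScalarFacts.

Lemma sumrB2 (V : zmodType) m p (F G : 'I_m -> 'I_p -> V) :
  \sum_(i < m) \sum_(j < p) F i j - \sum_(i < m) \sum_(j < p) G i j
  = \sum_(i < m) \sum_(j < p) (F i j - G i j).
Proof. by rewrite -sumrB; apply: eq_bigr => i _; rewrite -sumrB. Qed.

Lemma symmxE (R : realType) m (a : 'M[R]_m) i j : symmx a -> a j i = a i j.
Proof. by move=> sym; rewrite -[in RHS]sym mxE. Qed.

Section QuadraticForms.
Variables (R : realType) (m : nat).
Implicit Types (a : 'M[R]_m) (c x y : 'I_m -> R).

Definition qform a x : R := \sum_(s < m) \sum_(l < m) a s l * x s * x l.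

(* A logarithmic minorant of qform a x, exact at x = c; it produces both the
   A^- terms and the graph terms of J. *)
Definition pairlog a c x : R :=
  \sum_(s < m) \sum_(l < m) a s l * c s * c l * (1 + ln (x s * x l / (c s * c l))).

(* For a symmetric nonnegative a, x^T a x is majorized by a diagonal quadratic
   form with weights (c a)_s / c_s, by weighted AM-GM on each pair (s, l). *)
Lemma qform_le_diag a c x : symmx a -> (forall s l, 0 <= a s l) ->
  (forall s, 0 < c s) ->
  qform a x <= \sum_(s < m) (\sum_(l < m) c l * a l s) * x s ^+ 2 / c s.
Proof.
move=> sym a0 c0.
set D := \sum_(s < m) \sum_(l < m) a s l * c l * x s ^+ 2 / c s.
have swap : \sum_(s < m) \sum_(l < m) a s l * c s * x l ^+ 2 / c l = D.
  rewrite exchange_big; apply: eq_bigr => s _; apply: eq_bigr => l _.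
  by rewrite (symmxE _ _ sym).
have -> : \sum_(s < m) (\sum_(l < m) c l * a l s) * x s ^+ 2 / c s = D.
  apply: eq_bigr => s _; rewrite !mulr_suml; apply: eq_bigr => l _.
  rewrite (symmxE _ _ sym); ring.
suff : 2 * qform a x <= D + D by lra.
rewrite -{2}swap -big_split mulr_sumr; apply: ler_sum => s _.
rewrite -big_split mulr_sumr; apply: ler_sum => l _ /=.
have := ler_wpM2l (a0 s l) (weighted_amgm (x l) (x s) (c0 l) (c0 s)); lra.
Qed.

Lemma pairlog_le a c x : (forall s l, 0 <= a s l) ->
  (forall s, 0 < c s) -> (forall s, 0 < x s) -> pairlog a c x <= qform a x.
Proof.
move=> a0 c0 x0; apply: ler_sum => s _; apply: ler_sum => l _.
have := ler_wpM2l (a0 s l) (mul_1Dln_le (mulr_gt0 (x0 s) (x0 l)) (mulr_gt0 (c0 s) (c0 l))).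
lra.
Qed.

Lemma pairlog_id a c : (forall s, 0 < c s) -> pairlog a c c = qform a c.
Proof.
move=> c0; apply: eq_bigr => s _; apply: eq_bigr => l _.
by rewrite divff ?ln1 ?addr0 ?mulr1 // lt0r_neq0 // mulr_gt0.
Qed.

Lemma pairlog_diff a c x y : symmx a ->
  (forall s, 0 < c s) -> (forall s, 0 < x s) -> (forall s, 0 < y s) ->
  pairlog a c x - pairlog a c y
  = 2 * \sum_(s < m) (\sum_(l < m) c l * a l s) * (c s * (ln (x s) - ln (y s))).
Proof.
move=> sym c0 x0 y0; set L := fun s => ln (x s) - ln (y s).
set X := \sum_(s < m) \sum_(l < m) a s l * c s * c l * L s.
transitivity (X + \sum_(s < m) \sum_(l < m) a s l * c s * c l * L l).
  rewrite /pairlog sumrB2 -big_split; apply: eq_bigr => s _.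
  rewrite -big_split; apply: eq_bigr => l _ /=.
  rewrite !ln_div ?lnM ?posrE ?mulr_gt0 // /L; ring.
have -> : \sum_(s < m) \sum_(l < m) a s l * c s * c l * L l = X.
  rewrite exchange_big; apply: eq_bigr => s _; apply: eq_bigr => l _.
  rewrite (symmxE _ _ sym); ring.
have -> : \sum_(s < m) (\sum_(l < m) c l * a l s) * (c s * L s) = X.
  apply: eq_bigr => s _; rewrite mulr_suml; apply: eq_bigr => l _.
  rewrite (symmxE _ _ sym); ring.
ring.
Qed.
End QuadraticForms.

Section MatrixFacts.
Variables (R : realType) (n k : nat).
Implicit Types (M N V U : 'M[R]_(n, k)).

Lemma pospart_nonneg p q (M : 'M[R]_(p, q)) : nonnegmx (pospart M).
Proof.
move=> i j; rewrite mxE; apply: divr_ge0; last lra.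
by have := ler_norm (- M i j); rewrite normrN; lra.
Qed.

Lemma negpart_nonneg p q (M : 'M[R]_(p, q)) : nonnegmx (negpart M).
Proof. by move=> i j; rewrite mxE; apply: divr_ge0; have := ler_norm (M i j); lra. Qed.

Lemma pospart_sym p (M : 'M[R]_p) : symmx M -> symmx (pospart M).
Proof. by move=> sym; apply/matrixP => i j; rewrite !mxE (symmxE _ _ sym). Qed.

Lemma negpart_sym p (M : 'M[R]_p) : symmx M -> symmx (negpart M).
Proof. by move=> sym; apply/matrixP => i j; rewrite !mxE (symmxE _ _ sym). Qed.

Lemma posmxW p q (M : 'M[R]_(p, q)) : posmx M -> nonnegmx M.
Proof. by move=> pM i j; exact: ltW. Qed.

Lemma nonnegmxD p q (M N : 'M[R]_(p, q)) : nonnegmx M -> nonnegmx N -> nonnegmx (M + N).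
Proof. by move=> M0 N0 i j; rewrite mxE addr_ge0. Qed.

Lemma nonnegmxZ p q (x : R) (M : 'M[R]_(p, q)) : 0 <= x -> nonnegmx M -> nonnegmx (x *: M).
Proof. by move=> x0 M0 i j; rewrite mxE mulr_ge0. Qed.

Lemma nonnegmxM p q r (M : 'M[R]_(p, q)) (N : 'M[R]_(q, r)) :
  nonnegmx M -> nonnegmx N -> nonnegmx (M *m N).
Proof. by move=> M0 N0 i j; rewrite mxE sumr_ge0 // => l _; rewrite mulr_ge0. Qed.

Lemma degmxE (W : 'M[R]_n) V i s : (degmx W *m V) i s = (\sum_(l < n) W i l) * V i s.
Proof.
rewrite mxE (bigD1 i) //= big1 ?addr0; first by rewrite mxE eqxx mul1r.
by move=> j /negbTE ji; rewrite mxE eq_sym ji !mul0r.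
Qed.

Lemma degmx_nonneg (W : 'M[R]_n) : nonnegmx W -> nonnegmx (degmx W).
Proof. by move=> W0 i j; rewrite mxE mulr_ge0 ?ler0n ?sumr_ge0. Qed.

Lemma posmx_convex t V U : posmx V -> posmx U -> 0 <= t <= 1 ->
  posmx (t *: V + (1 - t) *: U).
Proof. by move=> pV pU t01 i s; rewrite !mxE convex_comb_gt0. Qed.

(* The Frobenius pairing <M, N> = Tr (M^T N); every trace in F is of this form. *)
Definition frob M N : R := \sum_(i < n) \sum_(s < k) M i s * N i s.

Lemma tr_frob M N : \tr (M^T *m N) = frob M N.
Proof.
rewrite /mxtrace /frob exchange_big /=; apply: eq_bigr => s _.
by rewrite mxE; apply: eq_bigr => i _; rewrite mxE.
Qed.

Lemma frobDl M1 M2 N : frob (M1 + M2) N = frob M1 N + frob M2 N.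
Proof.
rewrite /frob -big_split; apply: eq_bigr => i _.
by rewrite -big_split; apply: eq_bigr => s _; rewrite mxE mulrDl.
Qed.

Lemma frobZl x M N : frob (x *: M) N = x * frob M N.
Proof.
rewrite /frob mulr_sumr; apply: eq_bigr => i _.
by rewrite mulr_sumr; apply: eq_bigr => s _; rewrite mxE mulrA.
Qed.

Lemma frob_mulmxr V (A : 'M[R]_k) : frob V (V *m A) = \sum_(i < n) qform A (fun s => V i s).
Proof.
apply: eq_bigr => i _; rewrite /qform exchange_big; apply: eq_bigr => s _.
by rewrite mxE mulr_sumr; apply: eq_bigr => l _; ring.
Qed.

Lemma frob_mulmxl V (W : 'M[R]_n) : frob V (W *m V) = \sum_(s < k) qform W (fun j => V j s).
Proof.
rewrite /frob exchange_big; apply: eq_bigr => s _; apply: eq_bigr => j _.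
by rewrite mxE mulr_sumr; apply: eq_bigr => l _; ring.
Qed.

Lemma tr_frobr V (A : 'M[R]_k) : \tr (V *m A *m V^T) = frob V (V *m A).
Proof. by rewrite mxtrace_mulC tr_frob. Qed.

Lemma tr_frobl V (W : 'M[R]_n) : \tr (V^T *m W *m V) = frob V (W *m V).
Proof. by rewrite -mulmxA tr_frob. Qed.
End MatrixFacts.

Section AuxiliaryTerms.
Variables (R : realType) (n k : nat).
Implicit Types (V U : 'M[R]_(n, k)) (A : 'M[R]_k) (B : 'M[R]_(n, k)) (W : 'M[R]_n).

Definition Fterm A B V : R :=
  - 2 * frob V (pospart B) + 2 * frob V (negpart B)
  + frob V (V *m pospart A) - frob V (V *m negpart A).

Definition Fgraph W V : R := frob V (degmx W *m V) - frob V (W *m V).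

Lemma Fobj_split (lam2 : R) A1 A2 B1 B2 (WP WQ : 'M[R]_n) V :
  Fobj lam2 A1 A2 B1 B2 WP WQ V
  = Fterm A1 B1 V + Fterm A2 B2 V + lam2 * (Fgraph WP V + Fgraph WQ V).
Proof. by rewrite /Fobj !tr_frobr !tr_frobl !tr_frob /Fterm /Fgraph; ring. Qed.

Lemma JtermE A B V V' : Jterm A B V V' =
  - 2 * (\sum_(i < n) \sum_(s < k) pospart B i s * V' i s * (1 + ln (V i s / V' i s)))
  + \sum_(i < n) \sum_(s < k) negpart B i s * ((V i s ^+ 2 + V' i s ^+ 2) / V' i s)
  + \sum_(i < n) \sum_(s < k) (V' *m pospart A) i s * V i s ^+ 2 / V' i s
  - \sum_(i < n) pairlog (negpart A) (fun s => V' i s) (fun s => V i s).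
Proof. by []. Qed.

Lemma JgraphE W V V' : Jgraph W V V' =
  \sum_(i < n) \sum_(s < k) (degmx W *m V') i s * V i s ^+ 2 / V' i s
  - \sum_(s < k) pairlog W (fun j => V' j s) (fun j => V j s).
Proof.
rewrite /Jgraph; congr (_ - _).
by under eq_bigr => j _ do rewrite exchange_big; rewrite exchange_big.
Qed.

Lemma Jterm_ge A B V V' : symmx A -> posmx V -> posmx V' ->
  Fterm A B V <= Jterm A B V V'.
Proof.
move=> sym pV pV'; rewrite /Fterm JtermE.
have hlin : \sum_(i < n) \sum_(s < k) pospart B i s * V' i s * (1 + ln (V i s / V' i s))
            <= frob V (pospart B).
  apply: ler_sum => i _; apply: ler_sum => s _.
  by have := ler_wpM2l (pospart_nonneg B i s) (mul_1Dln_le (pV i s) (pV' i s)); lra.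
have hneg : 2 * frob V (negpart B)
    <= \sum_(i < n) \sum_(s < k) negpart B i s * ((V i s ^+ 2 + V' i s ^+ 2) / V' i s).
  rewrite mulr_sumr; apply: ler_sum => i _; rewrite mulr_sumr; apply: ler_sum => s _.
  by have := ler_wpM2l (negpart_nonneg B i s) (twice_le_sqr_div (V i s) (pV' i s)); lra.
have hpos : frob V (V *m pospart A)
    <= \sum_(i < n) \sum_(s < k) (V' *m pospart A) i s * V i s ^+ 2 / V' i s.
  rewrite frob_mulmxr; apply: ler_sum => i _.
  under eq_bigr => s _ do rewrite mxE.
  exact: qform_le_diag (pospart_sym sym) (pospart_nonneg A) (pV' i).
have hpair : \sum_(i < n) pairlog (negpart A) (fun s => V' i s) (fun s => V i s)
             <= frob V (V *m negpart A).
  rewrite frob_mulmxr; apply: ler_sum => i _.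
  exact: pairlog_le (negpart_nonneg A) (pV' i) (pV i).
lra.
Qed.

Lemma Jterm_id A B V : posmx V -> Jterm A B V V = Fterm A B V.
Proof.
move=> pV; have V0 i s : V i s != 0 by exact: lt0r_neq0.
rewrite JtermE /Fterm; congr (- 2 * _ + _ + _ - _).
- apply: eq_bigr => i _; apply: eq_bigr => s _.
  by rewrite divff // ln1 addr0 mulr1 mulrC.
- rewrite /frob mulr_sumr; apply: eq_bigr => i _; rewrite mulr_sumr.
  by apply: eq_bigr => s _; field.
- by apply: eq_bigr => i _; apply: eq_bigr => s _; field.
- by rewrite frob_mulmxr; apply: eq_bigr => i _; rewrite pairlog_id.
Qed.

Lemma Jgraph_ge W V V' : nonnegmx W -> posmx V -> posmx V' ->
  Fgraph W V <= Jgraph W V V'.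
Proof.
move=> W0 pV pV'; rewrite /Fgraph JgraphE (frob_mulmxl V W).
have -> : frob V (degmx W *m V)
        = \sum_(i < n) \sum_(s < k) (degmx W *m V') i s * V i s ^+ 2 / V' i s.
  apply: eq_bigr => i _; apply: eq_bigr => s _; rewrite !degmxE.
  by field; exact: lt0r_neq0.
rewrite lerD2l lerN2; apply: ler_sum => s _.
exact: pairlog_le W0 (fun j => pV' j s) (fun j => pV j s).
Qed.

Lemma Jgraph_id W V : posmx V -> Jgraph W V V = Fgraph W V.
Proof.
move=> pV; rewrite JgraphE /Fgraph (frob_mulmxl V W); congr (_ - _).
- apply: eq_bigr => i _; apply: eq_bigr => s _; rewrite !degmxE.
  by field; exact: lt0r_neq0.
- by apply: eq_bigr => s _; rewrite pairlog_id.
Qed.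

(* The entrywise increments through which J(V, V') - J(U, V') factors. *)
Definition sqgap V U V' : 'M[R]_(n, k) :=
  \matrix_(i, s) ((V i s ^+ 2 - U i s ^+ 2) / V' i s).
Definition lngap V U V' : 'M[R]_(n, k) :=
  \matrix_(i, s) (V' i s * (ln (V i s) - ln (U i s))).

Lemma Jterm_diff A B V U V' : symmx A -> posmx V -> posmx U -> posmx V' ->
  Jterm A B V V' - Jterm A B U V'
  = frob (negpart B + V' *m pospart A) (sqgap V U V')
    - 2 * frob (pospart B + V' *m negpart A) (lngap V U V').
Proof.
move=> sym pV pU pV'; rewrite !JtermE !frobDl.
have dlin : \sum_(i < n) \sum_(s < k) pospart B i s * V' i s * (1 + ln (V i s / V' i s))
          - \sum_(i < n) \sum_(s < k) pospart B i s * V' i s * (1 + ln (U i s / V' i s))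
          = frob (pospart B) (lngap V U V').
  rewrite sumrB2; apply: eq_bigr => i _; apply: eq_bigr => s _.
  by rewrite !mxE !ln_div ?posrE //; ring.
have dneg : \sum_(i < n) \sum_(s < k) negpart B i s * ((V i s ^+ 2 + V' i s ^+ 2) / V' i s)
          - \sum_(i < n) \sum_(s < k) negpart B i s * ((U i s ^+ 2 + V' i s ^+ 2) / V' i s)
          = frob (negpart B) (sqgap V U V').
  by rewrite sumrB2; apply: eq_bigr => i _; apply: eq_bigr => s _; rewrite !mxE; ring.
have dpos : \sum_(i < n) \sum_(s < k) (V' *m pospart A) i s * V i s ^+ 2 / V' i s
          - \sum_(i < n) \sum_(s < k) (V' *m pospart A) i s * U i s ^+ 2 / V' i s
          = frob (V' *m pospart A) (sqgap V U V').
  by rewrite sumrB2; apply: eq_bigr => i _; apply: eq_bigr => s _; rewrite !mxE; ring.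
have dpair : \sum_(i < n) pairlog (negpart A) (fun s => V' i s) (fun s => V i s)
           - \sum_(i < n) pairlog (negpart A) (fun s => V' i s) (fun s => U i s)
           = 2 * frob (V' *m negpart A) (lngap V U V').
  rewrite -sumrB /frob mulr_sumr; apply: eq_bigr => i _.
  rewrite (pairlog_diff (negpart_sym sym) (pV' i) (pV i) (pU i)); congr (2 * _).
  by apply: eq_bigr => s _; rewrite !mxE.
lra.
Qed.

Lemma Jgraph_diff W V U V' : symmx W -> posmx V -> posmx U -> posmx V' ->
  Jgraph W V V' - Jgraph W U V'
  = frob (degmx W *m V') (sqgap V U V') - 2 * frob (W *m V') (lngap V U V').
Proof.
move=> sym pV pU pV'; rewrite !JgraphE.
have dsq : \sum_(i < n) \sum_(s < k) (degmx W *m V') i s * V i s ^+ 2 / V' i s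
         - \sum_(i < n) \sum_(s < k) (degmx W *m V') i s * U i s ^+ 2 / V' i s
         = frob (degmx W *m V') (sqgap V U V').
  by rewrite sumrB2; apply: eq_bigr => i _; apply: eq_bigr => s _; rewrite !mxE; ring.
have dpair : \sum_(s < k) pairlog W (fun j => V' j s) (fun j => V j s)
           - \sum_(s < k) pairlog W (fun j => V' j s) (fun j => U j s)
           = 2 * frob (W *m V') (lngap V U V').
  rewrite -sumrB /frob exchange_big mulr_sumr; apply: eq_bigr => s _.
  rewrite (pairlog_diff sym (fun j => pV' j s) (fun j => pV j s) (fun j => pU j s)).
  congr (2 * _); apply: eq_bigr => j _.
  rewrite [(W *m V') j s]mxE [lngap _ _ _ _ _]mxE; congr (_ * _).
  by apply: eq_bigr => l _; rewrite (symmxE _ _ sym) mulrC.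
lra.
Qed.
End AuxiliaryTerms.

Section SeparableFunction.
Variables (R : realType) (n k : nat).
Implicit Types (V U C a b : 'M[R]_(n, k)).

Definition Jsep a b V : R := \sum_(i < n) \sum_(s < k) logquad (a i s) (b i s) (V i s).

(* The weights of the logarithmic and quadratic parts of J(., V'), built from
   the numerator D1 and denominator D2 of the update rule. *)
Definition lnweight (D1 V' : 'M[R]_(n, k)) : 'M[R]_(n, k) :=
  \matrix_(i, s) (2 * V' i s * D1 i s).
Definition sqweight (D2 V' : 'M[R]_(n, k)) : 'M[R]_(n, k) :=
  \matrix_(i, s) (D2 i s / V' i s).

Lemma frob_gaps_sep (D1 D2 V U V' : 'M[R]_(n, k)) :
  frob D2 (sqgap V U V') - 2 * frob D1 (lngap V U V')
  = Jsep (lnweight D1 V') (sqweight D2 V') V - Jsep (lnweight D1 V') (sqweight D2 V') U.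
Proof.
rewrite /frob mulr_sumr; under [X in _ - X]eq_bigr => i _ do rewrite mulr_sumr.
rewrite /Jsep !sumrB2; apply: eq_bigr => i _; apply: eq_bigr => s _.
by rewrite !mxE /logquad; ring.
Qed.

Lemma weights_nonneg (D1 D2 V' : 'M[R]_(n, k)) :
  nonnegmx D1 -> nonnegmx D2 -> posmx V' ->
  nonnegmx (lnweight D1 V') /\ nonnegmx (sqweight D2 V').
Proof.
move=> D1_0 D2_0 /posmxW V'0; split=> i s; rewrite mxE.
  by rewrite !mulr_ge0 ?V'0 ?D1_0.
by rewrite divr_ge0 ?V'0 ?D2_0.
Qed.

Lemma Jsep_convex a b t V U : nonnegmx a -> nonnegmx b ->
  posmx V -> posmx U -> 0 <= t <= 1 ->
  Jsep a b (t *: V + (1 - t) *: U) <= t * Jsep a b V + (1 - t) * Jsep a b U.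
Proof.
move=> a0 b0 pV pU t01; rewrite /Jsep !mulr_sumr -big_split; apply: ler_sum => i _.
rewrite !mulr_sumr -big_split; apply: ler_sum => s _ /=; rewrite !mxE.
exact: logquad_convex.
Qed.

Lemma Jsep_argmin a b C : (forall i s, 0 < b i s) -> posmx C ->
  (forall i s, a i s = 2 * b i s * C i s ^+ 2) ->
  forall V, posmx V -> Jsep a b C <= Jsep a b V /\ (Jsep a b V <= Jsep a b C -> V = C).
Proof.
move=> b0 pC aE V pV.
have gap0 i s : 0 <= b i s * (V i s - C i s) ^+ 2 by rewrite mulr_ge0 ?sqr_ge0 ?ltW.
have gap : \sum_(i < n) \sum_(s < k) b i s * (V i s - C i s) ^+ 2 <= Jsep a b V - Jsep a b C.
  rewrite /Jsep sumrB2; apply: ler_sum => i _; apply: ler_sum => s _.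
  by rewrite aE; apply: logquad_min; rewrite ?ltW.
have sum0 : 0 <= \sum_(i < n) \sum_(s < k) b i s * (V i s - C i s) ^+ 2.
  by apply: sumr_ge0 => i _; apply: sumr_ge0.
split=> [|le_VC]; first lra.
have /eqP zero : \sum_(i < n) \sum_(s < k) b i s * (V i s - C i s) ^+ 2 == 0 by rewrite eq_le sum0; lra.
apply/matrixP => i s; apply/eqP; rewrite -subr_eq0 -sqrf_eq0.
have zi := psumr_eq0P (fun i _ => sumr_ge0 _ (fun s _ => gap0 i s)) zero (i := i) isT.
have := psumr_eq0P (fun s _ => gap0 i s) zi (i := s) isT.
by move/eqP; rewrite mulf_eq0 (gt_eqF (b0 i s)).
Qed.

Definition update (D1 D2 V' : 'M[R]_(n, k)) : 'M[R]_(n, k) :=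
  \matrix_(i, j) (V' i j * Num.sqrt (D1 i j / D2 i j)).

Lemma update_argmin (D1 D2 V' : 'M[R]_(n, k)) : posmx D1 -> posmx D2 -> posmx V' ->
  posmx (update D1 D2 V') /\
  forall V, posmx V ->
    Jsep (lnweight D1 V') (sqweight D2 V') (update D1 D2 V')
      <= Jsep (lnweight D1 V') (sqweight D2 V') V
    /\ (Jsep (lnweight D1 V') (sqweight D2 V') V
          <= Jsep (lnweight D1 V') (sqweight D2 V') (update D1 D2 V') -> V = update D1 D2 V').
Proof.
move=> pD1 pD2 pV'.
set a := lnweight D1 V'; set b := sqweight D2 V'.
have upd_pos : posmx (update D1 D2 V').
  by move=> i s; rewrite mxE mulr_gt0 // sqrtr_gt0 divr_gt0.
have b_pos i s : 0 < b i s by rewrite mxE divr_gt0.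
have aE i s : a i s = 2 * b i s * update D1 D2 V' i s ^+ 2.
  rewrite !mxE exprMn sqr_sqrtr ?divr_ge0 ?ltW //.
  by field; rewrite !lt0r_neq0.
split=> //; exact: Jsep_argmin b_pos upd_pos aE.
Qed.
End SeparableFunction.

Section AuxiliaryFunction.
Variables (R : realType) (n k : nat) (lam2 : R).
Variables (A1 A2 : 'M[R]_k) (B1 B2 : 'M[R]_(n, k)) (WP WQ : 'M[R]_n).
Hypotheses (lam2_ge0 : 0 <= lam2) (sA1 : symmx A1) (sA2 : symmx A2).
Hypotheses (sP : symmx WP) (sQ : symmx WQ) (nP : nonnegmx WP) (nQ : nonnegmx WQ).
Implicit Types V U : 'M[R]_(n, k).

Let F := Fobj lam2 A1 A2 B1 B2 WP WQ.
Let J := Jaux lam2 A1 A2 B1 B2 WP WQ.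

Lemma Jaux_ge V (V' : 'M[R]_(n, k)) : posmx V -> posmx V' -> F V <= J V V'.
Proof.
move=> pV pV'; rewrite /F /J /Jaux Fobj_split.
apply: lerD; first by apply: lerD; apply: Jterm_ge.
by apply: ler_wpM2l => //; apply: lerD; apply: Jgraph_ge.
Qed.

Lemma Jaux_id V : posmx V -> J V V = F V.
Proof. by move=> pV; rewrite /F /J /Jaux Fobj_split !Jterm_id ?Jgraph_id. Qed.

Definition Delta1 (V' : 'M[R]_(n, k)) : 'M[R]_(n, k) :=
  pospart B1 + pospart B2 + V' *m (negpart A1 + negpart A2) + lam2 *: ((WP + WQ) *m V').
Definition Delta2 (V' : 'M[R]_(n, k)) : 'M[R]_(n, k) :=
  negpart B1 + negpart B2 + V' *m (pospart A1 + pospart A2)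
  + lam2 *: ((degmx WP + degmx WQ) *m V').

Lemma Delta_nonneg (V' : 'M[R]_(n, k)) : posmx V' ->
  nonnegmx (Delta1 V') /\ nonnegmx (Delta2 V').
Proof.
move=> /posmxW V'0; split.
- apply: nonnegmxD; last exact: nonnegmxZ lam2_ge0 (nonnegmxM (nonnegmxD nP nQ) V'0).
  apply: nonnegmxD; last exact: nonnegmxM V'0 (nonnegmxD (negpart_nonneg _) (negpart_nonneg _)).
  exact: nonnegmxD (pospart_nonneg _) (pospart_nonneg _).
- apply: nonnegmxD.
    apply: nonnegmxD; last exact: nonnegmxM V'0 (nonnegmxD (pospart_nonneg _) (pospart_nonneg _)).
    exact: nonnegmxD (negpart_nonneg _) (negpart_nonneg _).
  apply: nonnegmxZ lam2_ge0 (nonnegmxM (nonnegmxD _ _) V'0); exact: degmx_nonneg.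
Qed.

Lemma Jaux_sep V U (V' : 'M[R]_(n, k)) : posmx V -> posmx U -> posmx V' ->
  J V V' - J U V'
  = Jsep (lnweight (Delta1 V') V') (sqweight (Delta2 V') V') V
    - Jsep (lnweight (Delta1 V') V') (sqweight (Delta2 V') V') U.
Proof.
move=> pV pU pV'; rewrite -frob_gaps_sep.
have -> : J V V' - J U V'
  = (Jterm A1 B1 V V' - Jterm A1 B1 U V') + (Jterm A2 B2 V V' - Jterm A2 B2 U V')
    + lam2 * ((Jgraph WP V V' - Jgraph WP U V') + (Jgraph WQ V V' - Jgraph WQ U V')).
  by rewrite /J /Jaux; ring.
rewrite !Jterm_diff // !Jgraph_diff // /Delta1 /Delta2.
by rewrite !mulmxDr !mulmxDl !frobDl !frobZl !frobDl; ring.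
Qed.

(* Part (ii): J(., V') differs from the convex Jsep by a constant. *)
Lemma Jaux_convex (V' V1 V2 : 'M[R]_(n, k)) t : posmx V' -> posmx V1 -> posmx V2 ->
  0 <= t <= 1 -> J (t *: V1 + (1 - t) *: V2) V' <= t * J V1 V' + (1 - t) * J V2 V'.
Proof.
move=> pV' p1 p2 t01; have [D1_0 D2_0] := Delta_nonneg pV'.
have [a0 b0] := weights_nonneg D1_0 D2_0 pV'.
set a := lnweight (Delta1 V') V' in a0; set b := sqweight (Delta2 V') V' in b0.
have JE X : posmx X -> J X V' = Jsep a b X + (J V' V' - Jsep a b V').
  by move=> pX; have := Jaux_sep pX pV' pV'; lra.
rewrite (JE _ (posmx_convex p1 p2 t01)) (JE _ p1) (JE _ p2).
by have := Jsep_convex a0 b0 p1 p2 t01; lra.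
Qed.

Lemma Jaux_argmin (V' : 'M[R]_(n, k)) : posmx V' ->
  posmx (Delta1 V') -> posmx (Delta2 V') ->
  let Vstar := update (Delta1 V') (Delta2 V') V' in
  posmx Vstar /\ (forall V, posmx V -> J Vstar V' <= J V V') /\
  (forall V, posmx V -> J V V' <= J Vstar V' -> V = Vstar).
Proof.
move=> pV' pD1 pD2 Vs; have [Vs_pos argmin] := update_argmin pD1 pD2 pV'.
split=> //; split=> V pV; have [min uniq] := argmin V pV;
  have := Jaux_sep pV Vs_pos pV' => sep.
- lra.
- by move=> le; apply: uniq; lra.
Qed.
End AuxiliaryFunction.

Theorem mainTheorem2 (R : realType) (n k : nat) (lam2 : R)
  (A1 A2 : 'M[R]_k) (B1 B2 : 'M[R]_(n, k)) (WP WQ : 'M[R]_n) :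
  0 <= lam2 -> symmx A1 -> symmx A2 ->
  symmx WP -> symmx WQ -> nonnegmx WP -> nonnegmx WQ ->
  let F := Fobj lam2 A1 A2 B1 B2 WP WQ in
  let J := Jaux lam2 A1 A2 B1 B2 WP WQ in
  (* (i) J is an auxiliary function for F *)
  (forall V V' : 'M[R]_(n, k), posmx V -> posmx V' ->
     F V <= J V V' /\ J V V = F V) /\
  (* (ii) J(., V') is convex on the open positive orthant *)
  (forall V' : 'M[R]_(n, k), posmx V' ->
     forall (V1 V2 : 'M[R]_(n, k)) (t : R), posmx V1 -> posmx V2 ->
     0 <= t <= 1 ->
     J (t *: V1 + (1 - t) *: V2) V' <= t * J V1 V' + (1 - t) * J V2 V') /\
  (* (iii) closed-form global minimizer *)
  (forall V' : 'M[R]_(n, k), posmx V' ->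
     let Delta1 := pospart B1 + pospart B2 + V' *m (negpart A1 + negpart A2)
                   + lam2 *: ((WP + WQ) *m V') in
     let Delta2 := negpart B1 + negpart B2 + V' *m (pospart A1 + pospart A2)
                   + lam2 *: ((degmx WP + degmx WQ) *m V') in
     posmx Delta1 -> posmx Delta2 ->
     let Vstar := \matrix_(i, j) (V' i j * Num.sqrt (Delta1 i j / Delta2 i j)) in
     posmx Vstar /\
     (forall V : 'M[R]_(n, k), posmx V -> J Vstar V' <= J V V') /\
     (forall V : 'M[R]_(n, k), posmx V -> J V V' <= J Vstar V' -> V = Vstar)).
Proof.
move=> l0 sA1 sA2 sP sQ nP nQ F J; split; [|split].
- by move=> V V' pV pV'; split; [exact: Jaux_ge | exact: Jaux_id].
- by move=> V' pV' V1 V2 t; exact: Jaux_convex.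
- move=> V' pV' Delta1 Delta2 pD1 pD2.
  exact (Jaux_argmin sA1 sA2 sP sQ pV' pD1 pD2).
Qed.
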